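(* Let $T=(G,N,\psi)$ be a triple, $T'=(G',N',\psi')$ a linear reduction of $T$ with central character $\zeta'$, and $H$ a subgroup of $G$ with $N\le H$. Then $H':=H\cap G'=H(\zeta')$. Moreover, if $\psi$ extends to $H(\psi)$, then $\psi'$ extends to $H'(\psi)=H'(\psi')$.
   Context: $\mathrm{Irr}(X)$, $\mathrm{Lin}(X)$: complex irreducible, resp. linear, characters of a finite group $X$; $K(\phi)$ is the stabilizer of $\phi$ in $K$. A triple is $T=(G,N,\psi)$ with $G$ finite, $N\trianglelefteq G$, $\psi\in\mathrm{Irr}(N)$. The center $Z(T)$ is the center $Z(\psi^G)=\{g\in G:|\psi^G(g)|=\psi^G(1)\}$ of $\psi^G$, and the central character $\zeta^{(T)}$ is the unique linear character of $Z(T)$ lying under $\psi^G$. If $L\trianglelefteq G$, $L\le N$, and $\lambda\in\mathrm{Lin}(L)$ lies under $\psi$, the direct linear reduction $T(\lambda)$ is $(G(\lambda),N(\lambda),\psi_\lambda)$, with $\psi_\lambda$ the $\lambda$-Clifford correspondent of $\psi$ (unique irreducible character of $N(\lambda)$ over $\lambda$ inducing $\psi$). A linear reduction of $T$ is a triple obtained from $T$ by a finite chain of direct linear reductions. *)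

From HB Require Import structures.
From mathcomp Require Import all_boot all_order all_algebra all_fingroup all_solvable all_field all_character.
Set Implicit Arguments. Unset Strict Implicit. Unset Printing Implicit Defensive.
Import GroupScope GRing.Theory Num.Theory.
Local Open Scope ring_scope.

Record triple (gT : finGroupType) := Triple {
  tG : {group gT};
  tN : {group gT};
  tpsi : 'CF(tN) }.

Definition is_triple (gT : finGroupType) (T : triple gT) : Prop :=
  tN T <| tG T /\ tpsi T \in irr (tN T).

(* T' is a direct linear reduction T(lambda) of the triple T, for some
   L normal in G, L <= N, lambda linear character of L lying under psi:
   G' = G(lambda), N' = N(lambda) (stabilizers), psi' the lambda-Clifford
   correspondent of psi: irreducible character of N(lambda) lying over
   lambda and inducing psi. *)
Definition direct_lin_red (gT : finGroupType) (T T' : triple gT) : Prop :=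
  is_triple T /\
  exists (L : {group gT}) (lam : 'CF(L)),
    [/\ L <| tG T, L \subset tN T, lam \is a linear_char &
        '['Res[L] (tpsi T), lam] != 0] /\
    [/\ tG T' :=: 'I_(tG T)[lam],
        tN T' :=: 'I_(tN T)[lam],
        tpsi T' \in irr (tN T'),
        '['Res[L] (tpsi T'), lam] != 0 &
        'Ind[tN T] (tpsi T') = tpsi T].

Inductive lin_red (gT : finGroupType) (T : triple gT) : triple gT -> Prop :=
  | lin_red_refl : lin_red T T
  | lin_red_step T1 T2 : lin_red T T1 -> direct_lin_red T1 T2 -> lin_red T T2.

Definition triple_center (gT : finGroupType) (T : triple gT) : {set gT} :=
  ('Z('Ind[tG T] (tpsi T)))%CF.

Definition central_char (gT : finGroupType) (T : triple gT)
    (Z : {group gT}) (zeta : 'CF(Z)) : Prop :=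
  [/\ Z :=: triple_center T, zeta \is a linear_char &
      '['Res[Z] ('Ind[tG T] (tpsi T)), zeta] != 0].

Definition extends_to (gT : finGroupType) (N K : {group gT}) (psi : 'CF(N)) : Prop :=
  exists2 chi : 'CF(K), chi \is a character & 'Res[N] chi = psi.

From HB Require Import structures.
From mathcomp Require Import all_boot all_order all_algebra all_fingroup all_solvable all_field all_character.
Set Implicit Arguments. Unset Strict Implicit. Unset Printing Implicit Defensive.
Import GroupScope GRing.Theory Num.Theory.
Local Open Scope ring_scope.

(* Write T_(j+1) = T_j(lam_j) with lam_j linear on L_j. Every later triple
   stays over lam_j: its group fixes lam_j and its character restricts to L_j
   as a multiple of lam_j, because L_j lies in the center of the current
   character and hence fixes every linear constituent used in a later step.
   At the end L_j lies in Z(T') and zeta' restricts to lam_j, so an element of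
   G fixing zeta' fixes every lam_j and lies in G'; conversely G' fixes zeta'
   since it fixes psi'^G'.
   On elements fixing lam_j, induction from N_j(lam_j) commutes with
   conjugation and the Clifford correspondence is injective, so psi_j and
   psi_(j+1) have the same stabilizer there. An extension of psi_j is induced
   from its Clifford correspondent over lam_j, whose restriction to N_j(lam_j)
   is psi_(j+1) by a degree count. *)

Section Clifford.
Variable gT : finGroupType.
Implicit Types G K L M N : {group gT}.

Lemma cfcenter_commg_cfker N (psi : 'CF(N)) x z :
  x \in N -> z \in ('Z(psi))%CF -> [~ x, z] \in cfker psi.
Proof.
move=> Nx Zz; have Nz := subsetP (cfcenter_sub psi) z Zz.
have nKN : N \subset 'N(cfker psi) := normal_norm (cfker_normal psi).
have [nx nz] := (subsetP nKN x Nx, subsetP nKN z Nz).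
apply: coset_idr; first by rewrite groupR.
rewrite morphR //.
have /setIP[_ /centP cz] : coset (cfker psi) z \in 'Z(N / cfker psi).
  exact: subsetP (cfcenter_subset_center psi) _ (mem_quotient _ Zz).
by apply/eqP/commgP/commute_sym/cz/mem_quotient.
Qed.

(* [mu] is trivial on [L :&: cfker psi], and [x ^ z^-1 = x * [~ x, z^-1]]. *)
Lemma cfConjg_lin_constt_cfcenter N L (psi : 'CF(N)) (mu : 'CF(L)) z :
    psi \is a character -> L \subset N -> mu \is a linear_char ->
    '['Res[L] psi, mu] != 0 -> z \in ('Z(psi))%CF -> z \in 'N(L) ->
  (mu ^ z)%CF = mu.
Proof.
move=> Npsi sLN Lmu psi_mu Zz nLz; have [j Dmu] := irrP (lin_char_irr Lmu).
have ker_mu : L :&: cfker psi \subset cfker mu.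
  rewrite -cfker_Res // Dmu cfker_constt ?cfRes_char //.
  by rewrite irr_consttE -Dmu.
apply/cfun_inP=> x Lx; rewrite cfConjgE //.
have Lxz : (x ^ z^-1)%g \in L by rewrite memJ_norm ?groupV.
have Lc : [~ x, z^-1] \in L by rewrite groupM ?groupV.
have Kc : [~ x, z^-1] \in cfker mu.
  apply: (subsetP ker_mu); rewrite inE Lc cfcenter_commg_cfker ?groupV //.
  exact: subsetP sLN x Lx.
by rewrite conjg_mulR (lin_charM Lmu) // (cfker1 Kc) (lin_char1 Lmu) mulr1.
Qed.

Lemma constt_homogeneous K (phi : 'CF(K)) i :
  {subset irr_constt phi <= pred1 i} -> phi = '[phi, 'chi_i] *: 'chi_i.
Proof.
move=> phi_i; rewrite {1}[phi]cfun_sum_cfdot (bigD1 i) //= big1 ?addr0 // => j ij.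
have : j \notin irr_constt phi by apply: contra ij => /phi_i.
by rewrite irr_consttE negbK => /eqP->; rewrite scale0r.
Qed.

Lemma cfRes_constt_homogeneous L K N (chi : 'CF(N)) (i : Iirr K) j a :
    L \subset K -> K \subset N -> chi \is a character ->
    i \in irr_constt ('Res[K] chi) -> 'Res[L] chi = a *: 'chi_j ->
  'Res[L] 'chi_i = '['Res[L] 'chi_i, 'chi_j] *: 'chi_j.
Proof.
move=> sLK sKN Nchi chi_i chiL; apply: constt_homogeneous => k.
move/(constt_Res_trans (cfRes_char K Nchi) chi_i).
rewrite cfResRes // chiL irr_consttE cfdotZl mulf_eq0 negb_or => /andP[_].
by rewrite -irr_consttE constt_irr.
Qed.

Lemma cfRes_Inertia_homogeneous N L (psi : 'CF(N)) (lam : 'CF(L)) :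
    L <| N -> N \subset 'I[lam] -> psi \in irr N -> lam \in irr L ->
    '['Res[L] psi, lam] != 0 ->
  'Res[L] psi = '['Res[L] psi, lam] *: lam.
Proof.
move=> nsLN sNI /irrP[i ->] /irrP[j Dlam] psi_lam; subst lam.
have psi_j : j \in irr_constt ('Res[L] 'chi_i) by [].
rewrite {1}(Clifford_Res_sum_cfclass nsLN psi_j).
by rewrite cfclass_invariant // big_cons big_nil addr0.
Qed.

Lemma cfRes_lin_scale N L (chi : 'CF(N)) (lam : 'CF(L)) a :
  L \subset N -> lam \is a linear_char -> 'Res[L] chi = a *: lam -> a = chi 1%g.
Proof.
by move=> sLN Llam chiL; rewrite -(cfRes1 L) chiL cfunE lin_char1 ?mulr1.
Qed.

Lemma cfRes_Ind_invariant G N L (psi : 'CF(N)) :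
    L \subset N -> N \subset G -> G \subset 'I['Res[L] psi] ->
  'Res[L] ('Ind[G] psi) = #|G : N|%:R *: 'Res[L] psi.
Proof.
move=> sLN sNG sGI; have nLG := subset_trans sGI (norm_inertia _).
apply/cfun_inP=> x Lx; rewrite cfResE ?(subset_trans sLN) // cfIndE // cfunE.
have psiJ y : y \in G -> psi (x ^ y)%g = 'Res[L] psi x.
  move=> Gy; have Lxy : (x ^ y)%g \in L by rewrite memJ_norm ?(subsetP nLG).
  by rewrite -(cfResE psi sLN Lxy) inertia_valJ ?(subsetP sGI).
rewrite (eq_bigr _ psiJ) sumr_const -[_ *+ #|G|]mulr_natr natf_indexg //.
by rewrite mulrCA mulrC [_^-1 * _]mulrC.
Qed.

Lemma cfRes_lin_sub_cfcenter N L (chi : 'CF(N)) (lam : 'CF(L)) a :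
    chi \is a character -> L \subset N -> lam \is a linear_char ->
  'Res[L] chi = a *: lam -> L \subset ('Z(chi))%CF.
Proof.
move=> Nchi sLN Llam chiL; have a_chi1 := cfRes_lin_scale sLN Llam chiL.
apply/subsetP=> x Lx; rewrite char_cfcenterE ?(subsetP sLN) //.
rewrite -(cfResE chi sLN Lx) chiL cfunE normrM normC_lin_char // mulr1.
by rewrite a_chi1 ger0_norm ?char1_ge0.
Qed.

Lemma cfInd_irr1_neq0 G N (psi : 'CF(N)) :
  N \subset G -> psi \in irr N -> 'Ind[G] psi 1%g != 0.
Proof.
move=> sNG /irrP[i ->]; rewrite cfInd1 // mulf_neq0 ?irr1_neq0 //.
by rewrite pnatr_eq0 -lt0n indexg_gt0.
Qed.

Lemma subset_leq_index (A B : {set gT}) K :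
  A \subset B -> (#|A : K| <= #|B : K|)%N.
Proof.
move=> sAB; apply: subset_leq_card; apply/subsetP=> _ /rcosetsP[x Ax ->].
by apply/rcosetsP; exists x; rewrite ?(subsetP sAB).
Qed.

Section CliffordCorrespondence.
Variables (N L : {group gT}) (t : Iirr L).
Hypothesis nsLN : L <| N.
Local Notation lam := 'chi[L]_t.
Local Notation T := 'I_N[lam].

Lemma Clifford_Ind_irr (i : Iirr T) :
  '['Res[L] 'chi_i, lam] != 0 -> 'Ind[N] 'chi_i \in irr N.
Proof.
have [IndA _ _ _ _] := constt_Inertia_bijection t nsLN.
by move=> i_lam; rewrite IndA // constt_Ind_Res irr_consttE.
Qed.

Lemma Clifford_Ind_inj (phi1 phi2 : 'CF(T)) :
    phi1 \in irr T -> phi2 \in irr T ->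
    '['Res[L] phi1, lam] != 0 -> '['Res[L] phi2, lam] != 0 ->
  'Ind[N] phi1 = 'Ind[N] phi2 -> phi1 = phi2.
Proof.
move=> /irrP[i1 ->] /irrP[i2 ->] i1_lam i2_lam Ind12.
have [_ Ind_inj _ _ _] := constt_Inertia_bijection t nsLN.
congr 'chi_(_); apply: Ind_inj; rewrite ?constt_Ind_Res ?irr_consttE //.
by rewrite /Ind_Iirr Ind12.
Qed.

Lemma Clifford_constt_Res_Ind (i k : Iirr T) :
    '['Res[L] 'chi_i, lam] != 0 -> '['Res[L] 'chi_k, lam] != 0 ->
  k \in irr_constt ('Res[T] ('Ind[N] 'chi_i)) -> k = i.
Proof.
move=> i_lam k_lam ik.
have [_ _ _ constt_Res _] := constt_Inertia_bijection t nsLN.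
apply/eqP; rewrite -[_ == _](constt_Res i) ?constt_Ind_Res ?irr_consttE //.
by rewrite inE /= ik constt_Ind_Res irr_consttE.
Qed.

Lemma inertia_Clifford_Ind (phi : 'CF(T)) g :
    phi \in irr T -> '['Res[L] phi, lam] != 0 -> g \in 'N(N) -> g \in 'I[lam] ->
  (g \in 'I['Ind[N] phi]) = (g \in 'I[phi]).
Proof.
move=> irr_phi phi_lam nNg Ig; have nLg := subsetP (norm_inertia lam) g Ig.
have nTg : g \in 'N(T).
  by rewrite -sub1set normsI ?sub1set //; apply: subsetP (normG _) g Ig.
rewrite ![g \in 'I[_]]inE nNg nTg /=; apply/eqP/eqP=> [IndJ | phiJ]; last first.
  by rewrite cfConjgInd_norm // phiJ.
apply: Clifford_Ind_inj; rewrite ?cfConjg_irr -?cfConjgInd_norm //.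
by rewrite -cfConjgRes_norm // -{2}(inertiaJ Ig) cfConjg_iso.
Qed.

Lemma Clifford_constt_Res_homogeneous M (i : Iirr T) (s : Iirr 'I_M[lam])
    (chi : 'CF(M)) :
    L <| M -> N \subset M ->
    '['Res[L] 'chi_i, lam] != 0 -> '['Res[L] 'chi_s, lam] != 0 ->
    chi \is a character -> s \in irr_constt ('Res['I_M[lam]] chi) ->
    'Res[N] chi = 'Ind[N] 'chi_i ->
  'Res[T] 'chi_s = '['Res[T] 'chi_s, 'chi_i] *: 'chi_i.
Proof.
move=> nsLM sNM i_lam s_lam Nchi s_chi chiN; set K := 'I_M[lam].
have sTK : T \subset K := setSI _ sNM; have sKM : K \subset M := subsetIl _ _.
have sLT : L \subset T by rewrite subsetI normal_sub ?sub_inertia.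
have nsLK : L <| K := normalS (subset_trans sLT sTK) sKM nsLM.
have s_lamL : 'Res[L] 'chi_s = '['Res[L] 'chi_s, lam] *: lam.
  exact: cfRes_Inertia_homogeneous (subsetIr _ _) (mem_irr s) (mem_irr t) _.
apply: constt_homogeneous => k s_k; apply/eqP/(Clifford_constt_Res_Ind i_lam).
  have Dk := cfRes_constt_homogeneous sLT sTK (irr_char s) s_k s_lamL.
  by apply: contraNneq (Res_irr_neq0 L k) => k0; rewrite Dk k0 scale0r.
rewrite -chiN (cfResRes _ (subsetIl _ _) sNM) -(cfResRes _ sTK sKM).
exact: constt_Res_trans (cfRes_char K Nchi) s_chi k s_k.
Qed.

(* With [chi = 'Ind 'chi_s] and ['Res[T] 'chi_s = n *: 'chi_i], comparing     *)
(* degrees gives [#|M : 'I_M[lam]| * n = #|N : T| <= #|M : 'I_M[lam]|].       *)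
Lemma Clifford_Ind_extends M (i : Iirr T) (chi : 'CF(M)) :
    L <| M -> N \subset M -> '['Res[L] 'chi_i, lam] != 0 ->
    chi \is a character -> 'Res[N] chi = 'Ind[N] 'chi_i ->
  extends_to 'I_M[lam] 'chi_i.
Proof.
move=> nsLM sNM i_lam Nchi chiN; set K := 'I_M[lam].
have [sLN _] := andP nsLN; have sTN : T \subset N := subsetIl _ _.
have sKM : K \subset M := subsetIl _ _.
have sLT : L \subset T by rewrite subsetI sLN sub_inertia.
have /(cfRes_irr_irr Nchi)/irrP[c Dchi] : 'Res[N] chi \in irr N.
  by rewrite chiN Clifford_Ind_irr.
have Ind_i : i \in irr_constt ('Res[T] ('Ind[N] 'chi_i)).
  by rewrite irr_consttE cfdot_Res_l (irrWnorm (Clifford_Ind_irr i_lam)) oner_eq0.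
have [IndA _ IndB _ _] := constt_Inertia_bijection t nsLM.
have /imsetP[s s_lam Dc] : c \in Ind_Iirr M @: irr_constt ('Ind[K] lam).
  rewrite IndB constt_Ind_Res -(cfResRes _ sLN) // -Dchi chiN.
  rewrite -(cfResRes _ sLT sTN); apply: constt_Res_trans Ind_i _ _ => //.
  by rewrite cfRes_char ?cfInd_char ?irr_char.
have DchiInd : chi = 'Ind[M] 'chi_s by rewrite Dchi Dc cfIirrE ?IndA.
have s_chi : s \in irr_constt ('Res[K] chi).
  by rewrite irr_consttE cfdot_Res_l -DchiInd Dchi cfnorm_irr oner_eq0.
rewrite constt_Ind_Res irr_consttE in s_lam.
have Ds := Clifford_constt_Res_homogeneous nsLM sNM i_lam s_lam Nchi s_chi chiN.
have [n De] := natrP (Cnat_cfdot_char_irr i (cfRes_char T (irr_char s))).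
rewrite De in Ds; have n_gt0 : (0 < n)%N.
  rewrite lt0n; apply: contraNneq (Res_irr_neq0 T s) => n0.
  by rewrite Ds n0 scale0r.
have index_n : (#|M : K| * n)%N = #|N : T|.
  have := congr1 (fun f : 'CF(N) => f 1%g) chiN.
  rewrite cfRes1 DchiInd !cfInd1 //.
  rewrite -(cfRes1 T) Ds cfunE mulrA -natrM => /(mulIf (irr1_neq0 i))/eqP.
  by rewrite eqr_nat => /eqP.
have index_le : (#|N : T| <= #|M : K|)%N.
  have -> : T = N :&: K :> {set gT} by rewrite /K setIA (setIidPl sNM).
  by rewrite indexgI subset_leq_index.
have n1 : n = 1%N.
  apply/eqP; rewrite eqn_leq n_gt0 andbT -(leq_pmul2l (indexg_gt0 M K)) muln1.
  by rewrite index_n.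
by exists 'chi_s; rewrite ?irr_char // Ds n1 scale1r.
Qed.

End CliffordCorrespondence.
End Clifford.

Section LinearReduction.
Variable gT : finGroupType.
Implicit Types (T : triple gT) (G H L N Z : {group gT}).

Lemma direct_lin_redP T1 T2 : direct_lin_red T1 T2 ->
  is_triple T1 /\ exists L (lam : 'CF(L)),
   [/\ L <| tG T1, L \subset tN T1, lam \is a linear_char &
       '['Res[L] (tpsi T1), lam] != 0] /\
   [/\ tG T2 = 'I_(tG T1)[lam]%G, tN T2 = 'I_(tN T1)[lam]%G,
       tpsi T2 \in irr (tN T2), '['Res[L] (tpsi T2), lam] != 0 &
       'Ind[tN T1] (tpsi T2) = tpsi T1].
Proof.
case=> T1_triple [L [lam [lamP [eG eN T2P]]]]; split=> //.
by exists L, lam; split=> //; split=> //; apply: val_inj.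
Qed.

Lemma lin_red_cons T1 T2 T3 :
  direct_lin_red T1 T2 -> lin_red T2 T3 -> lin_red T1 T3.
Proof.
move=> T12; elim=> [|T T' _ IH T_T']; last exact: lin_red_step IH T_T'.
exact: lin_red_step (lin_red_refl _) T12.
Qed.

Lemma lin_red_triple T T' : is_triple T -> lin_red T T' ->
  [/\ tN T' <| tG T', tpsi T' \in irr (tN T'), tG T' \subset tG T
    & tN T' \subset tN T].
Proof.
case=> nsNG irr_psi; elim=> [|T1 [G2 N2 psi2] _ [nsNG1 _ sG1 sN1]] //.
case/direct_lin_redP=> _ [L [lam [_ [/= eG eN irr_psi2 _ _]]]]; subst G2 N2.
split=> //=.
- apply/andP; split; first by rewrite setSI ?normal_sub.
  apply: normsI; first exact: subset_trans (subsetIl _ _) (normal_norm nsNG1).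
  exact: subset_trans (subsetIr _ _) (normG _).
- exact: subset_trans (subsetIl _ _) sG1.
- exact: subset_trans (subsetIl _ _) sN1.
Qed.

Definition invariant_over L (lam : 'CF(L)) T : Prop :=
  [/\ L \subset tN T, tN T \subset tG T, tG T \subset 'I[lam],
      tpsi T \in irr (tN T) & exists a, 'Res[L] (tpsi T) = a *: lam].

Lemma direct_lin_red_invariant_over T1 T2 L (lam : 'CF(L)) :
    is_triple T1 ->
    [/\ L <| tG T1, L \subset tN T1, lam \is a linear_char &
        '['Res[L] (tpsi T1), lam] != 0] ->
    [/\ tG T2 = 'I_(tG T1)[lam]%G, tN T2 = 'I_(tN T1)[lam]%G,
        tpsi T2 \in irr (tN T2), '['Res[L] (tpsi T2), lam] != 0 &
        'Ind[tN T1] (tpsi T2) = tpsi T1] ->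
  invariant_over lam T2.
Proof.
case: T1 T2 => G1 N1 psi1 [G2 N2 psi2] [/= nsNG1 _] [/= nsLG sLN Llam _].
case=> /= eG eN irr_psi2 psi2_lam _; subst G2 N2.
have sLN2 : L \subset 'I_N1[lam] by rewrite subsetI sLN sub_inertia.
split=> //=; [exact: setSI (normal_sub nsNG1) | exact: subsetIr |].
exists '['Res[L] psi2, lam]; apply: cfRes_Inertia_homogeneous => //.
- apply: normalS nsLG => //.
  exact: subset_trans (subsetIl _ _) (normal_sub nsNG1).
- exact: subsetIr.
- exact: lin_char_irr.
Qed.

Lemma invariant_over_direct_lin_red T T' L (lam : 'CF(L)) :
    lam \is a linear_char -> invariant_over lam T -> direct_lin_red T T' ->
  invariant_over lam T'.
Proof.
case: T T' => G N psi [G2 N2 psi2] Llam [/= sLN sNG sGI irr_psi [a psiL]].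
case/direct_lin_redP=> [[/= nsNG _] [L' [lam' [[/= nsL'G sL'N Llam' psi_lam']]]]].
case=> /= eG eN irr_psi2 _ psi2_psi; subst G2 N2.
have Npsi : psi \is a character := irrWchar irr_psi.
have nL'N : N \subset 'N(L') := subset_trans sNG (normal_norm nsL'G).
have sLZ := cfRes_lin_sub_cfcenter Npsi sLN Llam psiL.
have sLI' : L \subset 'I[lam'].
  apply/subsetP=> l Ll; have nL'l := subsetP nL'N l (subsetP sLN l Ll).
  rewrite inE nL'l /=; apply/eqP.
  apply: cfConjg_lin_constt_cfcenter Npsi sL'N Llam' psi_lam' _ _ => //.
  exact: subsetP sLZ l Ll.
have sLN2 : L \subset 'I_N[lam'] by rewrite subsetI sLN.
split=> //=; [exact: setSI | exact: subset_trans (subsetIl _ _) sGI |].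
have [k Dpsi2] := irrP irr_psi2; have [j Dlam] := irrP (lin_char_irr Llam).
have psi_k : k \in irr_constt ('Res['I_N[lam']] psi).
  by rewrite irr_consttE cfdot_Res_l -Dpsi2 psi2_psi irrWnorm ?oner_eq0.
rewrite Dlam in psiL *; rewrite Dpsi2.
by eexists; apply: cfRes_constt_homogeneous psiL; rewrite ?subsetIl.
Qed.

Lemma invariant_over_lin_red T T' L (lam : 'CF(L)) :
  lam \is a linear_char -> invariant_over lam T -> lin_red T T' ->
  invariant_over lam T'.
Proof.
by move=> Llam lamT; elim=> // T1 T2 _ IH; apply: invariant_over_direct_lin_red.
Qed.

Lemma central_char_Res T Z (zeta : 'CF(Z)) : central_char T zeta ->
  'Res[Z] ('Ind[tG T] (tpsi T)) = 'Ind[tG T] (tpsi T) 1%g *: zeta.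
Proof.
rewrite /central_char /triple_center; set chi := 'Ind[_] _.
case=> eZ Lzeta chi_zeta; have eZchi : Z = cfcenter_group chi by apply: val_inj.
subst Z.
have [zeta0 Lzeta0 chiZ] := cfcenter_Res chi; rewrite chiZ in chi_zeta *.
congr (_ *: _); move: chi_zeta; rewrite cfdotZl mulf_eq0 negb_or => /andP[_].
have [i ->] := irrP (lin_char_irr Lzeta0).
have [j ->] := irrP (lin_char_irr Lzeta).
by rewrite cfdot_irr pnatr_eq0 eqb0 negbK => /eqP->.
Qed.

Lemma central_char_inertia T Z (zeta : 'CF(Z)) :
    central_char T zeta -> tN T \subset tG T -> tpsi T \in irr (tN T) ->
  tG T \subset 'I[zeta].
Proof.
move=> zetaT sNG irr_psi; have chiZ := central_char_Res zetaT.
case: zetaT => eZ _ _; have nZG : tG T \subset 'N(Z).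
  by rewrite eZ normal_norm ?cfcenter_normal.
apply/subsetP=> g Gg; rewrite inE (subsetP nZG) //=; apply/eqP.
apply: (scalerI (cfInd_irr1_neq0 sNG irr_psi)).
rewrite -linearZ /= -chiZ cfConjgRes_norm ?(subsetP nZG) ?cfConjg_id //.
exact: subsetP (normG _) g Gg.
Qed.

Lemma invariant_over_central_char T L (lam : 'CF(L)) Z (zeta : 'CF(Z)) :
    lam \is a linear_char -> invariant_over lam T -> central_char T zeta ->
  L \subset Z /\ 'Res[L] zeta = lam.
Proof.
move=> Llam [sLN sNG sGI irr_psi [a psiL]] zetaT.
have chiZ := central_char_Res zetaT; case: zetaT => eZ _ _.
move: chiZ eZ; rewrite /triple_center; set chi := 'Ind[_] _ => chiZ eZ.
have sLG := subset_trans sLN sNG.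
have sZG : Z \subset tG T by rewrite eZ cfcenter_sub.
have chiL : 'Res[L] chi = (#|tG T : tN T|%:R * a) *: lam.
  rewrite cfRes_Ind_invariant // ?psiL ?scalerA //.
  exact: subset_trans sGI (inertia_scale _ _).
have sLZ : L \subset Z.
  by rewrite eZ (cfRes_lin_sub_cfcenter _ sLG Llam chiL) ?cfInd_char ?irrWchar.
split=> //; apply: (scalerI (cfInd_irr1_neq0 sNG irr_psi)).
by rewrite -linearZ /= -chiZ cfResRes // chiL (cfRes_lin_scale sLG Llam chiL).
Qed.

(* Stated for every intermediate triple [T] so that induction on the chain
   [T0 -> T] applies. *)
Lemma lin_red_inertia_central_char T0 Tf Z (zeta : 'CF(Z)) T :
    central_char Tf zeta -> lin_red T0 T -> lin_red T Tf ->
  'I_(tG T0)[zeta] \subset tG T.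
Proof.
move=> zetaTf; elim=> [|T1 T2 _ IH T12] T2Tf; first exact: subsetIl.
have sIG1 := IH (lin_red_cons T12 T2Tf).
have [T1_triple [L [lam [lamP T2P]]]] := direct_lin_redP T12.
have lamT2 := direct_lin_red_invariant_over T1_triple lamP T2P.
case: lamP => nsLG _ Llam _; case: T2P => -> _ _ _ _.
have [sLZ zetaL] := invariant_over_central_char Llam
  (invariant_over_lin_red Llam lamT2 T2Tf) zetaTf.
apply/subsetP=> g Ig; have G1g := subsetP sIG1 g Ig.
have /setIP[_ Izg] := Ig; have nLg := subsetP (normal_norm nsLG) g G1g.
rewrite inE G1g inE nLg /= -zetaL cfConjgRes_norm ?(inertiaJ Izg) //.
exact: subsetP (norm_inertia zeta) g Izg.
Qed.

Lemma lin_red_inertia_extends T0 H T :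
    is_triple T0 -> H \subset tG T0 -> tN T0 \subset H ->
    extends_to 'I_H[tpsi T0]%G (tpsi T0) -> lin_red T0 T ->
  'I_(H :&: tG T)[tpsi T0] = 'I_(H :&: tG T)[tpsi T] /\
  extends_to 'I_(H :&: tG T)[tpsi T]%G (tpsi T).
Proof.
move=> T0_triple sHG sNH psi_ext; elim=> [|T1 [G2 N2 psi2] T01 IH T12] /=.
  split=> //; suff -> : 'I_(H :&: tG T0)[tpsi T0]%G = 'I_H[tpsi T0]%G by [].
  by apply: val_inj; rewrite /= (setIidPl sHG).
have [nsN1G1 _ _ sN1N] := lin_red_triple T0_triple T01.
case/direct_lin_redP: T12 => _ [L [lam [[nsLG sLN Llam _]]]].
case=> /= eG eN irr_psi2 psi2_lam psi2_psi1; subst G2 N2.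
have [t Dlam] := irrP (lin_char_irr Llam); have [k Dpsi2] := irrP irr_psi2.
subst lam psi2; case: IH => inertia_psi1 [chi Nchi chiN1].
have nsLN1 : L <| tN T1 := normalS sLN (normal_sub nsN1G1) nsLG.
set M := 'I_(H :&: tG T1)[tpsi T1].
have inertiaE : 'I_(H :&: 'I_(tG T1)['chi_t])['chi_k] = 'I_M['chi_t].
  apply/setP=> g; rewrite !in_setI; case: (g \in H) => //=.
  case G1g: (g \in tG T1) => //=; case Ig: (g \in 'I['chi_t]); rewrite ?andbF //.
  rewrite -psi2_psi1 inertia_Clifford_Ind // ?andbT //.
  exact: subsetP (normal_norm nsN1G1) g G1g.
split; first by rewrite inertiaE /M -inertia_psi1 setIA setIAC.
have sN1M : tN T1 \subset M.
  by rewrite !subsetI (subset_trans sN1N sNH) normal_sub // sub_inertia.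
have nsLM : L <| M.
  apply: normalS (subset_trans sLN sN1M) _ nsLG.
  exact: subset_trans (subsetIl _ _) (subsetIr _ _).
have := Clifford_Ind_extends nsLN1 nsLM sN1M psi2_lam Nchi.
rewrite psi2_psi1 => /(_ chiN1).
by have -> : 'I_(H :&: 'I_(tG T1)['chi_t])['chi_k]%G = 'I_M['chi_t]%G
  by apply: val_inj.
Qed.
End LinearReduction.

Theorem lemma6p2 (gT : finGroupType) (G N : {group gT}) (psi : 'CF(N))
    (T' : triple gT) (Z' : {group gT}) (zeta' : 'CF(Z')) (H : {group gT}) :
  is_triple (@Triple gT G N psi) ->
  lin_red (@Triple gT G N psi) T' ->
  central_char T' zeta' ->
  H \subset G -> N \subset H ->
  H :&: tG T' = 'I_H[zeta'] /\
  (extends_to ('I_H[psi])%G psi ->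
     'I_(H :&: tG T')[psi] = 'I_(H :&: tG T')[tpsi T'] /\
     extends_to ('I_(H :&: tG T')[tpsi T'])%G (tpsi T')).
Proof.
move=> T_triple T_T' zetaT' sHG sNH.
split=> [|psi_ext]; last first.
  exact: lin_red_inertia_extends T_triple sHG sNH psi_ext T_T'.
have [nsNG' irr_psi' _ _] := lin_red_triple T_triple T_T'.
have sG'I := central_char_inertia zetaT' (normal_sub nsNG') irr_psi'.
have sIG' := lin_red_inertia_central_char zetaT' T_T' (lin_red_refl T').
apply/eqP; rewrite eqEsubset setIS //= subsetI subsetIl /=.
exact: subset_trans (setSI _ sHG) sIG'.
Qed.
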